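(* Let $G$ be a connected graph of order at least three. Then $\gamma_{cI}(G)=2\beta(G)$ if and only if $G\in\mathcal{G}$.
   Context: All graphs are finite and simple; $N(v)$ is the open neighborhood of $v$. A leaf is a vertex of degree one. $\beta(G)$ is the vertex cover number (minimum size of a set containing at least one endpoint of every edge). For $f:V(G)\to\{0,1,2\}$ let $V_i=\{v: f(v)=i\}$ and $\omega(f)=\sum_v f(v)$. A covering Italian dominating function (CID function) of $G$ is an $f:V(G)\to\{0,1,2\}$ such that every vertex $v$ with $f(v)=0$ satisfies $\sum_{u\in N(v)}f(u)\ge 2$, and $V_0$ is an independent set. $\gamma_{cI}(G)$ is the minimum of $\omega(f)$ over all CID functions of $G$. The family $\mathcal{G}$: a graph $G$ belongs to $\mathcal{G}$ if it is constructed from a graph $H$ (an induced subgraph of $G$) as follows: $S=V(G)\setminus V(H)$ is an independent set of $G$; every vertex of $H$ is joined to at least two vertices of $S$, at least one of which is a leaf of $G$; and for every $k\ge1$, any $k$ independent vertices of $H$, chosen among those vertices of $H$ adjacent to exactly one leaf in $S$, have (together) at least $k$ non-leaf (independent) neighbors in $S$. *)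

From mathcomp Require Import all_boot all_order.
Set Implicit Arguments. Unset Strict Implicit. Unset Printing Implicit Defensive.

Section Graphs.
Variables (T : finType) (e : rel T).

Definition simple_graph : Prop := symmetric e /\ irreflexive e.
Definition connected_graph : Prop := forall x y : T, connect e x y.

Definition nbhd (v : T) : {set T} := [set u | e v u].
Definition is_leaf (v : T) : bool := #|nbhd v| == 1.

Definition independent (A : {set T}) : Prop :=
  forall u v, u \in A -> v \in A -> ~~ e u v.

Definition vertex_cover (C : {set T}) : bool :=
  [forall u, forall v, e u v ==> (u \in C) || (v \in C)].

(* vertex cover number: minimum size of a vertex cover ([set: T] is one) *)
Definition beta : nat :=
  #|[arg min_(C < [set: T] | vertex_cover C) #|C|]|.

Definition weight (f : {ffun T -> 'I_3}) : nat := \sum_(v : T) (f v : nat).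

Definition V0 (f : {ffun T -> 'I_3}) : {set T} := [set v | (f v : nat) == 0].

Definition is_CID (f : {ffun T -> 'I_3}) : bool :=
  [forall v, ((f v : nat) == 0) ==> (2 <= \sum_(u in nbhd v) (f u : nat))]
  && [forall u, forall v, (u \in V0 f) && (v \in V0 f) ==> ~~ e u v].

(* the constant-2 function is a CID function *)
Definition two_fun : {ffun T -> 'I_3} := [ffun => (ord_max : 'I_3)].

Definition gamma_cI : nat :=
  weight [arg min_(f < two_fun | is_CID f) weight f].

(* The family \mathcal{G}: H is the vertex set of the induced subgraph,
   S = V(G) \ V(H). *)
Definition in_family_G : Prop :=
  exists H : {set T},
    let S := ~: H in
    independent S /\
    (forall v, v \in H ->
       2 <= #|nbhd v :&: S| /\ exists2 l, l \in nbhd v :&: S & is_leaf l) /\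
    (forall I : {set T}, I \subset H -> independent I ->
       (forall v, v \in I -> #|[set l in nbhd v :&: S | is_leaf l]| = 1) ->
       #|I| <= #|[set u in S | ~~ is_leaf u &
                   [exists v in I, u \in nbhd v]]|).

End Graphs.

From mathcomp Require Import all_boot all_order.
From mathcomp Require Import zify.
Set Implicit Arguments. Unset Strict Implicit. Unset Printing Implicit Defensive.

(* If no vertex is isolated, weight 2 on a minimum vertex cover and 0 elsewhere
   is a CID function, so gamma_cI <= 2 beta.
   Conversely, let H be as in the family.  In a CID function, a vertex v of H
   together with its pendant leaves outside H carries weight at least 2, unless
   v has weight 0 and a single pendant leaf, of weight 1.  These deficient
   vertices are independent, so the Hall-type condition gives at least as many
   non-leaf neighbours of them outside H, all of positive weight; hence every
   CID function weighs at least 2|H| >= 2 beta.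
   For the forward direction let C be a vertex cover with 2|C| <= gamma_cI.
   Lowering a vertex v of C to weight 1 gives a CID function unless v has a
   pendant leaf outside C.  If every vertex of an independent I included in C
   has exactly one pendant leaf outside C, then weight 0 on I, 2 on the rest
   of C and 1 on the neighbours of I outside C is a CID function of weight at
   most 2|C| - |I| + (number of non-leaf such neighbours).  So C satisfies the
   conditions defining the family. *)

Section CoveringItalian.
Variables (T : finType) (e : rel T).
Hypothesis esym : symmetric e.
Hypothesis eirr : irreflexive e.

Local Notation N := (nbhd e).

Lemma in_nbhd u v : (u \in N v) = e v u.
Proof. by rewrite inE. Qed.

Lemma leq_sum_sub (P Q : pred T) (F : T -> nat) :
  (forall v, P v -> Q v) -> \sum_(v | P v) F v <= \sum_(v | Q v) F v.
Proof. exact: (sub_le_big leqnn (fun m n => leq_addr n m)). Qed.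

Lemma leq_nbhd_sum (F : T -> nat) v w : e v w -> F w <= \sum_(u in N v) F u.
Proof. by move=> evw; rewrite (bigD1 w) ?in_nbhd //= leq_addr. Qed.

Lemma leq_nbhd_sum2 (F : T -> nat) v w1 w2 :
  e v w1 -> e v w2 -> w1 != w2 -> F w1 + F w2 <= \sum_(u in N v) F u.
Proof.
move=> evw1 evw2 w12; rewrite (bigD1 w1) ?in_nbhd //= leq_add2l.
by rewrite (bigD1 w2) /= ?leq_addr // inE evw2 eq_sym.
Qed.

Lemma sum_mem_card (A : {set T}) : \sum_v (v \in A : nat) = #|A|.
Proof. by rewrite -sum1_card [RHS]big_mkcond. Qed.

Definition cid_weighting (g : T -> nat) : Prop :=
  [/\ forall v, g v <= 2,
      forall v, g v = 0 -> 2 <= \sum_(u in N v) g u &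
      forall u v, g u = 0 -> g v = 0 -> ~~ e u v].

Lemma is_CIDP (f : {ffun T -> 'I_3}) :
  is_CID e f <-> cid_weighting (fun v => f v).
Proof.
split.
- case/andP => /forallP zero_dom /forallP zero_ind.
  split=> [v | v f0 | u v fu fv]; first by rewrite -ltnS ltn_ord.
    by have /implyP := zero_dom v; apply; apply/eqP.
  by have /forallP/(_ v)/implyP := zero_ind u; apply; rewrite !inE fu fv.
- case=> _ zero_dom zero_ind; apply/andP; split; apply/forallP => u.
    by apply/implyP => /eqP /zero_dom.
  apply/forallP => v; apply/implyP; rewrite !inE => /andP[/eqP fu /eqP fv].
  exact: zero_ind.
Qed.

Lemma two_fun_CID : is_CID e (two_fun T).
Proof. by apply/is_CIDP; split=> [v | v | u v]; rewrite ffunE. Qed.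

Lemma gamma_cI_le_sum (g : T -> nat) :
  cid_weighting g -> gamma_cI e <= \sum_v g v.
Proof.
case=> g_le2 g_dom g_ind.
pose f : {ffun T -> 'I_3} := [ffun v => inord (g v)].
have fE v : (f v : nat) = g v by rewrite ffunE inordK // ltnS.
have f_CID : is_CID e f.
  apply/is_CIDP; split=> [v | v | u v]; rewrite ?fE //.
    by under eq_bigr do rewrite fE; exact: g_dom.
  exact: g_ind.
rewrite /gamma_cI; case: arg_minnP => [|f0 _ f0_min]; first exact: two_fun_CID.
by apply: leq_trans (f0_min f f_CID) _; under [weight f]eq_bigr do rewrite fE.
Qed.

Lemma leq_gamma_cI n :
  (forall f, is_CID e f -> n <= weight f) -> n <= gamma_cI e.
Proof.
move=> n_le; rewrite /gamma_cI.
by case: arg_minnP => [|f f_CID _]; [exact: two_fun_CID | exact: n_le].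
Qed.

Lemma vertex_cover_nbr (C : {set T}) u v :
  vertex_cover e C -> e u v -> u \notin C -> v \in C.
Proof. by move=> /forallP/(_ u)/forallP/(_ v)/implyP cov /cov /orP[->|]. Qed.

Lemma vertex_coverC (C : {set T}) : vertex_cover e C <-> independent e (~: C).
Proof.
split=> [C_cov u v | indC].
  rewrite !inE => uC vC; apply/negP => euv.
  by move: (vertex_cover_nbr C_cov euv uC); rewrite (negPf vC).
apply/forallP => u; apply/forallP => v; apply/implyP => euv.
case: (boolP (u \in C)) => //= uC; apply/negPn/negP => vC.
by move: (indC u v); rewrite !inE uC vC euv => /(_ isT isT).
Qed.

Lemma min_vertex_cover : exists2 C, vertex_cover e C & beta e = #|C|.
Proof.
rewrite /beta; case: arg_minnP => [|C C_cov _]; last by exists C.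
by apply/forallP => u; apply/forallP => v; rewrite inE implybT.
Qed.

Lemma beta_le_cover (C : {set T}) : vertex_cover e C -> beta e <= #|C|.
Proof.
move=> C_cov; rewrite /beta; case: arg_minnP => [|C0 _]; last exact.
by apply/forallP => u; apply/forallP => v; rewrite inE implybT.
Qed.

Lemma gamma_cI_le_cover (C : {set T}) :
  (forall v, exists w, e v w) -> vertex_cover e C -> gamma_cI e <= 2 * #|C|.
Proof.
move=> nbr C_cov; rewrite -sum_mem_card big_distrr /=.
apply: gamma_cI_le_sum; split=> [v | v | u v]; first by case: (v \in C).
  case: (boolP (v \in C)) => // vC _; have [w evw] := nbr v.
  by apply: leq_trans (leq_nbhd_sum _ evw); rewrite (vertex_cover_nbr C_cov evw vC).
case: (boolP (u \in C)) => // uC _; case: (boolP (v \in C)) => // vC _.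
by apply/negP => /(vertex_cover_nbr C_cov)/(_ uC); rewrite (negPf vC).
Qed.

Definition leaf_nbhd (B : {set T}) v := [set l in N v :&: B | is_leaf e l].

Definition nonleaf_nbhd (B I : {set T}) :=
  [set u in B | ~~ is_leaf e u & [exists v in I, u \in N v]].

Lemma nbhd_leaf v l : e v l -> is_leaf e l -> N l = [set v].
Proof.
move=> evl /cards1P[x Nl].
have : v \in N l by rewrite in_nbhd esym.
by rewrite Nl inE => /eqP ->.
Qed.

Lemma nonleaf_other_nbr v u : e v u -> ~~ is_leaf e v -> exists2 w, e v w & w != u.
Proof.
move=> evu v_nleaf; have : 0 < #|N v :\ u|.
  by move: v_nleaf; rewrite /is_leaf (cardsD1 u) in_nbhd evu; lia.
by case/card_gt0P => w; rewrite !inE => /andP[wu evw]; exists w.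
Qed.

Lemma sum_leaf_nbhd (A B : {set T}) (F : T -> nat) :
  \sum_(v in A) \sum_(l in leaf_nbhd B v) F l =
  \sum_(l in B | is_leaf e l && [exists v in A, l \in N v]) F l.
Proof.
rewrite (exchange_big_dep
  (fun l => (l \in B) && is_leaf e l && [exists v in A, l \in N v])) /=.
  apply: eq_big => [l | l /andP[/andP[lB l_leaf] /exists_inP[w wA lw]]].
    by rewrite andbA.
  have Nl : N l = [set w] by apply: nbhd_leaf; rewrite -?in_nbhd.
  rewrite (big_pred1 w) // => v; rewrite !inE lB l_leaf !andbT esym -in_nbhd Nl inE.
  by apply/andb_idl => /eqP ->.
move=> v l vA; rewrite !inE => /andP[/andP[evl ->] ->] /=.
by apply/exists_inP; exists v; rewrite ?in_nbhd.
Qed.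

Section FamilyLowerBound.
Variable H : {set T}.
Local Notation S := (~: H).
Hypothesis H_leaf : forall v, v \in H -> exists2 l, l \in N v :&: S & is_leaf e l.
Hypothesis H_hall : forall I : {set T}, I \subset H -> independent e I ->
  (forall v, v \in I -> #|leaf_nbhd S v| = 1) -> #|I| <= #|nonleaf_nbhd S I|.
Variable g : T -> nat.
Hypothesis g_cid : cid_weighting g.

Let block v := g v + \sum_(l in leaf_nbhd S v) g l.
Let deficient := [set v in H | block v < 2].

Lemma deficient_block v :
  v \in deficient -> [/\ g v = 0, #|leaf_nbhd S v| = 1 & 0 < block v].
Proof.
have [_ g_dom _] := g_cid; rewrite inE => /andP[vH small].
have leaf_pos l : l \in leaf_nbhd S v -> 0 < g l.
  rewrite !inE => /andP[/andP[evl _] l_leaf]; rewrite lt0n; apply/eqP => /g_dom.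
  by rewrite (nbhd_leaf evl l_leaf) big_set1; rewrite /block in small; lia.
have card_le : #|leaf_nbhd S v| <= \sum_(l in leaf_nbhd S v) g l.
  by rewrite -sum1_card; apply: leq_sum => l /leaf_pos.
have card_pos : 0 < #|leaf_nbhd S v|.
  by have [l lNS l_leaf] := H_leaf vH; apply/card_gt0P; exists l; rewrite inE lNS.
by rewrite /block in small *; split; lia.
Qed.

Lemma card_deficient_le : #|deficient| <= \sum_(u in nonleaf_nbhd S deficient) g u.
Proof.
have [_ _ g_ind] := g_cid.
have D_H : deficient \subset H by apply/subsetP => v; rewrite inE => /andP[].
have D_ind : independent e deficient.
  by move=> u v /deficient_block[gu _ _] /deficient_block[gv _ _]; apply: g_ind.
apply: leq_trans (H_hall D_H D_ind _) _; first by move=> v /deficient_block[].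
rewrite -sum1_card; apply: leq_sum => u; rewrite inE => /and3P[_ _].
case/exists_inP => v vD uv; rewrite lt0n; apply/eqP => gu.
have [gv _ _] := deficient_block vD.
by move: (g_ind v u gv gu); rewrite -in_nbhd uv.
Qed.

Lemma sum_block_le :
  \sum_(v in H) block v + \sum_(u in nonleaf_nbhd S deficient) g u <= \sum_v g v.
Proof.
rewrite big_split /= sum_leaf_nbhd (bigID (mem H) predT) /= -addnA leq_add2l.
rewrite (bigID (is_leaf e) (fun v => v \notin H)) /= leq_add //.
  by apply: leq_sum_sub => v; rewrite inE => /andP[-> /andP[-> _]].
by apply: leq_sum_sub => v; rewrite !inE => /and3P[-> ->].
Qed.

Lemma family_weight_lb : 2 * #|H| <= \sum_v g v.
Proof.
have per_vertex : 2 * #|H| <= \sum_(v in H) (block v + (v \in deficient)).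
  rewrite mulnC -sum_nat_const; apply: leq_sum => v vH.
  case: (boolP (v \in deficient)) => [/deficient_block[_ _] | ]; first lia.
  by rewrite inE vH /= -leqNgt addn0.
have count_deficient : \sum_(v in H) (v \in deficient : nat) <= #|deficient|.
  by rewrite -sum_mem_card; apply: leq_sum_sub.
have := sum_block_le; have := card_deficient_le; rewrite big_split /= in per_vertex.
lia.
Qed.

End FamilyLowerBound.

Section Connected.
Hypothesis conn : connected_graph e.

Lemma connected_nbr : 1 < #|T| -> forall v, exists w, e v w.
Proof.
move=> T_gt1 v; have : 0 < #|[set~ v]| by rewrite cardsC1; lia.
case/card_gt0P => y; rewrite !inE => yv.
case/connectP: (conn v y) yv => [[|w p] /= vp ->]; first by rewrite eqxx.
by case/andP: vp => evw _; exists w.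
Qed.

Lemma connected_other_nbr :
  2 < #|T| -> forall v l, e v l -> is_leaf e l -> exists2 w, e v w & w != l.
Proof.
move=> T_gt2 v l evl l_leaf; apply: (nonleaf_other_nbr evl); apply/negP => v_leaf.
have Nl := nbhd_leaf evl l_leaf.
have Nv : N v = [set l] by apply: nbhd_leaf => //; rewrite esym.
have closed_vl : closed e [set v; l].
  apply: intro_closed => [|x y]; first exact: sym_connect_sym.
  rewrite -in_nbhd => yNx /set2P[] xE; move: yNx; rewrite xE ?Nv ?Nl.
    by move=> /set1P ->; rewrite !inE eqxx orbT.
  by move=> /set1P ->; rewrite !inE eqxx.
have : #|[set: T]| <= #|[set v; l]|.
  apply/subset_leq_card/subsetP => z _.
  by rewrite -(closed_connect closed_vl (conn v z)) !inE eqxx.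
by rewrite cardsT cards2; lia.
Qed.

End Connected.

Section TightCover.
Hypothesis nbr : forall v, exists w, e v w.
Hypothesis other_nbr : forall v l, e v l -> is_leaf e l -> exists2 w, e v w & w != l.
Variable C : {set T}.
Hypothesis C_cov : vertex_cover e C.
Hypothesis C_tight : 2 * #|C| <= gamma_cI e.

Lemma tight_cover_leaf v0 :
  v0 \in C -> exists2 l, l \in N v0 :&: ~: C & is_leaf e l.
Proof.
move=> v0C; case: (boolP [exists l in N v0 :&: ~: C, is_leaf e l]).
  by case/exists_inP => l; exists l.
move/exists_inPn => no_leaf.
pose g v := 2 * (v \in C :\ v0) + (v \in [set v0]).
have g_cid : cid_weighting g.
  split=> [v | v | u v]; rewrite /g !inE.
  - by case: eqP => //=; case: (v \in C).
  - case: eqP => //= _; case: (boolP (v \in C)) => //= vC _.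
    have [w evw wv0] : exists2 w, e v w & w != v0.
      have [w evw] := nbr v; case: (eqVneq w v0) => [wv0 | ]; last by exists w.
      rewrite -wv0; apply: (nonleaf_other_nbr evw); apply: no_leaf.
      by rewrite !inE vC andbT -wv0 esym.
    apply: leq_trans (leq_nbhd_sum _ evw).
    by rewrite !inE wv0 (vertex_cover_nbr C_cov evw vC).
  - case: eqP => //= _; case: (boolP (u \in C)) => //= uC _.
    case: eqP => //= _; case: (boolP (v \in C)) => //= vC _.
    by apply/negP => /(vertex_cover_nbr C_cov)/(_ uC); rewrite (negPf vC).
have := leq_trans C_tight (gamma_cI_le_sum g_cid).
by rewrite big_split -big_distrr /= !sum_mem_card cards1 (cardsD1 v0 C) v0C; lia.
Qed.

Section Hall.
Variable I : {set T}.
Hypothesis I_C : I \subset C.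
Hypothesis I_ind : independent e I.
Hypothesis I_leaf1 : forall v, v \in I -> #|leaf_nbhd (~: C) v| = 1.

Let out_nbhd := [set u in ~: C | [exists v in I, u \in N v]].
Let hall_weight v := 2 * (v \in C :\: I) + (v \in out_nbhd).

Lemma hall_weight_cid : cid_weighting hall_weight.
Proof.
have out_nbhd_nbr v u : v \in I -> e v u -> u \notin C -> u \in out_nbhd.
  by move=> vI evu uC; rewrite !inE uC; apply/exists_inP; exists v; rewrite ?in_nbhd.
have zero_out u :
    hall_weight u = 0 -> u \notin I -> (u \notin C) && (u \notin out_nbhd).
  move=> + uI; rewrite /hall_weight inE uI.
  by case: (u \in C); case: (u \in out_nbhd).
split=> [v | v gv0 | u v gu gv].
- rewrite /hall_weight !inE; case: (v \in C); rewrite /= ?andbT ?andbF.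
    by case: (v \in I).
  by case: [exists _ in I, _].
- case: (boolP (v \in I)) => vI.
    have /eqP/cards1P[l Ll] := I_leaf1 vI.
    have : l \in leaf_nbhd (~: C) v by rewrite Ll set11.
    rewrite !inE => /andP[/andP[evl lC] l_leaf].
    have [w evw wl] := other_nbr evl l_leaf.
    apply: leq_trans (leq_nbhd_sum2 _ evl evw _); last by rewrite eq_sym.
    have lI : l \notin I by apply: contra lC => /(subsetP I_C).
    have wI : w \notin I by apply/negP => /(I_ind vI); rewrite evw.
    have gl : hall_weight l = 1.
      by rewrite /hall_weight (out_nbhd_nbr _ _ vI evl lC) inE (negPf lC) andbF.
    have gw : 0 < hall_weight w.
      rewrite /hall_weight; case: (boolP (w \in C)) => wC.
        by rewrite inE wI wC ltn_addr.
      by rewrite (out_nbhd_nbr _ _ vI evw wC) addn1.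
    by rewrite gl add1n ltnS.
  have /andP[vC vW] := zero_out v gv0 vI.
  have [w evw] := nbr v; have wC := vertex_cover_nbr C_cov evw vC.
  have wI : w \notin I.
    by apply: contra vW => wI; apply: out_nbhd_nbr wI _ vC; rewrite esym.
  by apply: leq_trans (leq_nbhd_sum _ evw); rewrite /hall_weight inE wI wC.
- apply/negP => euv.
  case: (boolP (u \in I)) => uI; case: (boolP (v \in I)) => vI.
  + by move: (I_ind uI vI); rewrite euv.
  + by have /andP[vC /negP[]] := zero_out v gv vI; apply: out_nbhd_nbr uI euv vC.
  + have /andP[uC /negP[]] := zero_out u gu uI.
    by apply: out_nbhd_nbr vI _ uC; rewrite esym.
  + have /andP[uC _] := zero_out u gu uI; have /andP[vC _] := zero_out v gv vI.
    by move: (vertex_cover_nbr C_cov euv uC); rewrite (negPf vC).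
Qed.

Lemma card_out_nbhd_le : #|out_nbhd| <= #|I| + #|nonleaf_nbhd (~: C) I|.
Proof.
set LI := [set l | (l \in ~: C) && (is_leaf e l && [exists v in I, l \in N v])].
have <- : #|LI| = #|I|.
  rewrite /LI -sum1dep_card -(sum_leaf_nbhd I (~: C) (fun=> 1)) -sum1_card.
  by apply: eq_bigr => v vI; rewrite sum1_card I_leaf1.
apply: leq_trans (leq_card_setU LI (nonleaf_nbhd (~: C) I)).
apply/subset_leq_card/subsetP => u; rewrite !inE => /andP[uC uI].
by case: (is_leaf e u); rewrite uC uI ?orbT.
Qed.

Lemma tight_cover_hall : #|I| <= #|nonleaf_nbhd (~: C) I|.
Proof.
have := leq_trans C_tight (gamma_cI_le_sum hall_weight_cid).
rewrite big_split -big_distrr /= !sum_mem_card cardsD (setIidPr I_C).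
by have := card_out_nbhd_le; have := subset_leq_card I_C; lia.
Qed.

End Hall.

Lemma tight_cover_two_nbrs v : v \in C -> 2 <= #|N v :&: ~: C|.
Proof.
move=> vC; have [l lNC l_leaf] := tight_cover_leaf vC.
have L_sub : leaf_nbhd (~: C) v \subset N v :&: ~: C.
  by apply/subsetP => u; rewrite inE => /andP[].
case: (leqP 2 #|leaf_nbhd (~: C) v|) => [L_ge2 | L_lt2].
  exact: leq_trans L_ge2 (subset_leq_card L_sub).
have L1 : #|leaf_nbhd (~: C) v| = 1.
  have : 0 < #|leaf_nbhd (~: C) v| by apply/card_gt0P; exists l; rewrite inE lNC.
  lia.
have v_ind : independent e [set v] by move=> x y /set1P -> /set1P ->; rewrite eirr.
have v_leaf1 x : x \in [set v] -> #|leaf_nbhd (~: C) x| = 1 by move/set1P ->.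
have := tight_cover_hall (I := [set v]); rewrite sub1set vC cards1.
case/(_ isT v_ind v_leaf1)/card_gt0P => u.
rewrite !inE => /and3P[uC u_nleaf /exists_inP[_ /set1P -> uNv]].
have ul : u != l by apply: contraNneq u_nleaf => ->.
apply: leq_trans (subset_leq_card (_ : [set u; l] \subset _)).
  by rewrite cards2 ul.
by apply/subsetP => y /set2P[] ->; rewrite // !inE -in_nbhd uNv.
Qed.

Lemma tight_cover_in_family : in_family_G e.
Proof.
exists C; split; first exact/vertex_coverC.
split=> [v vC | I]; last exact: tight_cover_hall.
by split; [exact: tight_cover_two_nbrs | exact: tight_cover_leaf].
Qed.

End TightCover.
End CoveringItalian.

Theorem theorem5 (T : finType) (e : rel T) :
  simple_graph e -> connected_graph e -> 3 <= #|T| ->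
  (gamma_cI e = 2 * beta e <-> in_family_G e).
Proof.
move=> [esym eirr] conn T_ge3.
have nbr := connected_nbr conn (ltnW T_ge3).
have [C C_cov betaC] := min_vertex_cover e.
split=> [gammaE | [H [S_ind [H_nbhd H_hall]]]].
  have other_nbr := connected_other_nbr esym conn T_ge3.
  apply: (tight_cover_in_family esym eirr nbr other_nbr C_cov).
  by rewrite gammaE betaC.
have H_cov : vertex_cover e H by apply/vertex_coverC.
apply/eqP; rewrite eqn_leq betaC gamma_cI_le_cover //= -betaC.
apply: leq_gamma_cI => f /is_CIDP f_cid.
apply: leq_trans (family_weight_lb esym (fun v vH => (H_nbhd v vH).2) H_hall f_cid).
by rewrite leq_mul2l beta_le_cover.
Qed.
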